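(* Let $R:\mathbb{R}^4\to\mathbb{R}^4$ be any rotation, let $\mathcal{C}=\{(x,y,z,w)\in\mathbb{R}^4: x^2+y^2=\tfrac12=z^2+w^2\}$ be the Clifford torus, and let $Q=\pi\big(R(\mathcal{C})\setminus\{(0,0,0,1)\}\big)\subset\mathbb{R}^3$. Then there is a line $l\subset\mathbb{R}^3$ such that $Q$ has generalized reflectional symmetry along $l$.
   Context: A rotation of $\mathbb{R}^n$ is a linear map $\mathbb{R}^n\to\mathbb{R}^n$ whose matrix is orthogonal with determinant $1$. The unit three-sphere is $\mathbb{S}^3=\{\mathbf{x}\in\mathbb{R}^4:|\mathbf{x}|=1\}$, which every rotation maps onto itself. Stereographic projection $\pi:\mathbb{S}^3\setminus\{(0,0,0,1)\}\to\mathbb{R}^3$ is $\pi(x,y,z,w)=\frac{1}{1-w}(x,y,z)$. For $\mathbf{a}\in\mathbb{R}^3$ and $\rho>0$, reflection (inversion) about the sphere of center $\mathbf{a}$ and radius $\rho$ is the map $\psi_{\mathbf{a},\rho}:\mathbb{R}^3\setminus\{\mathbf{a}\}\to\mathbb{R}^3\setminus\{\mathbf{a}\}$, $\psi_{\mathbf{a},\rho}(\mathbf{p})=\rho^2\frac{\mathbf{p}-\mathbf{a}}{|\mathbf{p}-\mathbf{a}|^2}+\mathbf{a}$. A set $Q\subset\mathbb{R}^3$ has generalized reflectional symmetry along a line $l\subset\mathbb{R}^3$ if there exist a point $\mathbf{m}_0\in l$ and a number $\rho_0>0$ such that for every $\mathbf{a}\in l$, setting $\rho=\sqrt{|\mathbf{a}-\mathbf{m}_0|^2+\rho_0^2}$,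 one has $\psi_{\mathbf{a},\rho}(Q\setminus\{\mathbf{a}\})=Q\setminus\{\mathbf{a}\}$ (when $\mathbf{a}\notin Q$ this says $\psi_{\mathbf{a},\rho}(Q)=Q$). *)

From HB Require Import structures.
From mathcomp Require Import all_boot all_order all_algebra.
From mathcomp Require Import classical_sets reals.
Set Implicit Arguments. Unset Strict Implicit. Unset Printing Implicit Defensive.
Import Order.TTheory GRing.Theory Num.Theory.
Local Open Scope ring_scope.
Local Open Scope classical_set_scope.

Section Defs.
Variable R : realType.

Definition sqnorm n (x : 'cV[R]_n) : R := \sum_(i < n) x i 0 ^+ 2.
Definition vnorm n (x : 'cV[R]_n) : R := Num.sqrt (sqnorm x).

Definition rotation n (M : 'M[R]_n) : Prop := M^T *m M = 1%:M /\ \det M = 1.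

(* coordinates x,y,z,w of R^4 are indices 0,1,2,3 *)
Definition clifford_torus : set 'cV[R]_4 :=
  [set p | p 0 0 ^+ 2 + p 1 0 ^+ 2 = 2^-1 /\ p 2%:R 0 ^+ 2 + p 3%:R 0 ^+ 2 = 2^-1].

Definition north_pole : 'cV[R]_4 := \col_(i < 4) (if i == 3%:R then 1 else 0).

(* stereographic projection pi(x,y,z,w) = (x,y,z)/(1-w); only used off the north pole *)
Definition stereo (p : 'cV[R]_4) : 'cV[R]_3 :=
  (1 - p 3%:R 0)^-1 *: \col_(i < 3) p (widen_ord (isT : 3 <= 4)%N i) 0.

Definition sphere_inv (a : 'cV[R]_3) (rho : R) (p : 'cV[R]_3) : 'cV[R]_3 :=
  (rho ^+ 2 / sqnorm (p - a)) *: (p - a) + a.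

Definition is_line (l : set 'cV[R]_3) : Prop :=
  exists (p0 v : 'cV[R]_3), v != 0 /\ l = [set p0 + t *: v | t in [set: R]].

Definition gen_refl_sym (Q l : set 'cV[R]_3) : Prop :=
  exists (m0 : 'cV[R]_3) (rho0 : R), l m0 /\ 0 < rho0 /\
    forall a, l a ->
      let rho := Num.sqrt (vnorm (a - m0) ^+ 2 + rho0 ^+ 2) in
      sphere_inv a rho @` (Q `\ a) = Q `\ a.

End Defs.

From HB Require Import structures.
From mathcomp Require Import all_boot all_order all_algebra.
From mathcomp Require Import classical_sets reals.
From mathcomp Require Import ring lra.
Set Implicit Arguments. Unset Strict Implicit. Unset Printing Implicit Defensive.
Import Order.TTheory GRing.Theory Num.Theory.
Local Open Scope ring_scope.
Local Open Scope classical_set_scope.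

(* Reflecting R^4 in the hyperplane orthogonal to u preserves S^3, and when
   u_w <> 0 stereographic projection conjugates it to the inversion in the sphere
   of centre -(u_x, u_y, u_z) / u_w and squared radius |u|^2 / u_w^2.  The
   Clifford torus is invariant under the reflections whose normal lies in the
   xy-plane or in the zw-plane, so its image under Rot is invariant under those
   whose normal lies in a plane P = Rot(span(e_i, e_j)), where the pair is chosen
   so that P is not orthogonal to the w-axis.  Writing the normals in P as
   w0 - s w1 with w1 horizontal and orthogonal to w0, the centres of the
   inversions run along the line through m0 = -top(w0) / w0_w with direction
   top(w1), and the squared radius at a = m0 + t top(w1) is
   |w0|^2 / w0_w^2 + t^2 |w1|^2 = |a - m0|^2 + rho0^2. *)

Section EuclideanSpace.
Variables (R : realType) (n : nat).
Implicit Types (x y z u : 'cV[R]_n) (M : 'M[R]_n) (c : R).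

Definition dot x y : R := \sum_(i < n) x i 0 * y i 0.

Lemma dotC x y : dot x y = dot y x.
Proof. by apply: eq_bigr => i _; rewrite mulrC. Qed.

Lemma dotDl x y z : dot (x + y) z = dot x z + dot y z.
Proof. by rewrite /dot -big_split; apply: eq_bigr => i _; rewrite mxE mulrDl. Qed.

Lemma dotZl c x y : dot (c *: x) y = c * dot x y.
Proof. by rewrite /dot mulr_sumr; apply: eq_bigr => i _; rewrite mxE mulrA. Qed.

Lemma dotNl x y : dot (- x) y = - dot x y.
Proof. by rewrite -scaleN1r dotZl mulN1r. Qed.

Lemma dot_trmx x y : dot x y = (x^T *m y) 0 0.
Proof. by rewrite mxE; apply: eq_bigr => i _; rewrite mxE. Qed.

Lemma dot_orthogonal M x y : M^T *m M = 1%:M -> dot (M *m x) (M *m y) = dot x y.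
Proof. by move=> MTM; rewrite !dot_trmx trmx_mul -mulmxA (mulmxA M^T) MTM mul1mx. Qed.

Lemma sqnorm_dot x : sqnorm x = dot x x.
Proof. by apply: eq_bigr => i _; rewrite expr2. Qed.

Lemma sqnorm_ge0 x : 0 <= sqnorm x.
Proof. by apply: sumr_ge0 => i _; apply: sqr_ge0. Qed.

Lemma sqnorm_eq0 x : (sqnorm x == 0) = (x == 0).
Proof.
apply/eqP/eqP => [x0|->]; last by rewrite /sqnorm big1 // => i _; rewrite mxE expr0n.
apply/matrixP => i j; rewrite ord1 mxE.
have /(_ i isT)/eqP := psumr_eq0P (fun i _ => sqr_ge0 (x i 0)) x0.
by rewrite sqrf_eq0 => /eqP.
Qed.

Lemma sqnorm_coord_neq0 x i : x i 0 != 0 -> sqnorm x != 0.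
Proof. by apply: contraNneq => /eqP; rewrite sqnorm_eq0 => /eqP ->; rewrite mxE. Qed.

Lemma vnorm_sqr x : vnorm x ^+ 2 = sqnorm x.
Proof. by rewrite sqr_sqrtr // sqnorm_ge0. Qed.

Lemma sqnormZ c x : sqnorm (c *: x) = c ^+ 2 * sqnorm x.
Proof. by rewrite !sqnorm_dot dotZl dotC dotZl mulrA -expr2. Qed.

Lemma sqnormB x y : sqnorm (x - y) = sqnorm x - 2 * dot x y + sqnorm y.
Proof.
rewrite !sqnorm_dot !dotDl !dotNl ![dot _ (_ - _)]dotC !dotDl !dotNl [dot y x]dotC.
by ring.
Qed.

Lemma dotDr x y z : dot x (y + z) = dot x y + dot x z.
Proof. by rewrite dotC dotDl !(dotC x). Qed.

Lemma dotZr c x y : dot x (c *: y) = c * dot x y.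
Proof. by rewrite dotC dotZl dotC. Qed.

Lemma dot_col_orthogonal M i j : M^T *m M = 1%:M -> dot (col i M) (col j M) = (i == j)%:R.
Proof.
move=> MTM; have := congr1 (fun A : 'M_n => A i j) MTM; rewrite !mxE => <-.
by apply: eq_bigr => k _; rewrite !mxE.
Qed.

Lemma sqnorm_orthogonal M x : M^T *m M = 1%:M -> sqnorm (M *m x) = sqnorm x.
Proof. by move=> MTM; rewrite !sqnorm_dot dot_orthogonal. Qed.

(* [hrefl 0] is the identity, the coefficient being divided by [sqnorm 0 = 0];
   hence no lemma below needs [u != 0]. *)
Definition hrefl u x : 'cV[R]_n := x - (2 * dot x u / sqnorm u) *: u.

Lemma hrefl0 : hrefl 0 =1 id.
Proof. by move=> x; rewrite /hrefl scaler0 subr0. Qed.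

Lemma hrefl_coord u x i : u i 0 = 0 -> hrefl u x i 0 = x i 0.
Proof. by move=> ui0; rewrite !mxE ui0 mulr0 subr0. Qed.

Lemma dot_hrefl u x : dot (hrefl u x) u = - dot x u.
Proof.
have [->|u0] := eqVneq u 0.
  by rewrite hrefl0 /dot big1 ?oppr0 // => i _; rewrite mxE mulr0.
rewrite dotDl dotNl dotZl -sqnorm_dot; field.
by rewrite sqnorm_eq0.
Qed.

Lemma hreflK u : involutive (hrefl u).
Proof.
by move=> x; rewrite {1}/hrefl dot_hrefl /hrefl mulrN mulNr scaleNr opprK subrK.
Qed.

Lemma sqnorm_hrefl u x : sqnorm (hrefl u x) = sqnorm x.
Proof.
have [->|u0] := eqVneq u 0; first by rewrite hrefl0.
rewrite sqnormB sqnormZ [dot x _]dotC dotZl [dot u x]dotC; field.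
by rewrite sqnorm_eq0.
Qed.

Lemma orthogonal_hrefl M u x : M^T *m M = 1%:M ->
  M *m hrefl u x = hrefl (M *m u) (M *m x).
Proof. by move=> MTM; rewrite /hrefl !sqnorm_dot !dot_orthogonal // mulmxBr scalemxAr. Qed.

Lemma orthogonal_image_hrefl M (S : set 'cV[R]_n) u : M^T *m M = 1%:M ->
  (forall x, S x -> S (hrefl u x)) ->
  forall x, ((fun y => M *m y) @` S) x -> ((fun y => M *m y) @` S) (hrefl (M *m u) x).
Proof. by move=> MTM Su _ [x Sx <-]; exists (hrefl u x); rewrite ?orthogonal_hrefl //; apply: Su. Qed.

End EuclideanSpace.

Section Stereographic.
Variable R : realType.
Implicit Types (p q u w : 'cV[R]_4).

Definition top3 p : 'cV[R]_3 := \col_(i < 3) p (widen_ord (isT : 3 <= 4)%N i) 0.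

Lemma stereoE p : stereo p = (1 - p 3%:R 0)^-1 *: top3 p.
Proof. by []. Qed.

Lemma dot_top3 p q : dot (top3 p) (top3 q) = dot p q - p 3%:R 0 * q 3%:R 0.
Proof.
rewrite /dot [in RHS]big_ord_recr /=.
have -> : (ord_max : 'I_4) = 3%:R by apply: val_inj.
rewrite addrK; apply: eq_bigr => i _; rewrite !mxE.
by congr (p _ 0 * q _ 0); apply: val_inj.
Qed.

Lemma sqnorm_top3 p : sqnorm (top3 p) = sqnorm p - p 3%:R 0 ^+ 2.
Proof. by rewrite !sqnorm_dot dot_top3 expr2. Qed.

Lemma north_pole3 : north_pole R 3%:R 0 = 1.
Proof. by rewrite mxE eqxx. Qed.

Lemma north_poleP q : sqnorm q = 1 -> q 3%:R 0 = 1 -> q = north_pole R.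
Proof.
move=> q1 q3; apply/eqP; rewrite -subr_eq0 -sqnorm_eq0 sqnormB q1.
have -> : dot q (north_pole R) = q 3%:R 0.
  rewrite /dot (bigD1 3%:R) //= big1 ?mxE ?eqxx ?mulr1 ?addr0 // => i /negPf i3.
  by rewrite mxE i3 mulr0.
have -> : sqnorm (north_pole R) = 1.
  rewrite /sqnorm (bigD1 3%:R) //= big1 ?mxE ?eqxx ?expr1n ?addr0 // => i /negPf i3.
  by rewrite mxE i3 expr0n.
by rewrite q3; apply/eqP; ring.
Qed.

Definition inv_center u : 'cV[R]_3 := - (u 3%:R 0)^-1 *: top3 u.

Lemma hrefl3 u q : hrefl u q 3%:R 0 = q 3%:R 0 - 2 * dot q u / sqnorm u * u 3%:R 0.
Proof. by rewrite !mxE. Qed.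

Lemma sqnorm_stereo_sub_center q u : sqnorm q = 1 -> q 3%:R 0 != 1 -> u 3%:R 0 != 0 ->
  sqnorm (stereo q - inv_center u) =
  sqnorm u * (1 - hrefl u q 3%:R 0) / ((1 - q 3%:R 0) * u 3%:R 0 ^+ 2).
Proof.
move=> q1 q3 u3.
have u0 := sqnorm_coord_neq0 u3.
rewrite stereoE /inv_center scaleNr opprK sqnorm_dot dotDl !dotZl.
rewrite ![dot _ (_ + _)]dotC !dotDl !dotZl !dot_top3 -!sqnorm_dot q1 hrefl3 [dot u q]dotC.
by field; rewrite u3 u0 subr_eq0 eq_sym q3.
Qed.

Lemma sphere_inv_stereo q u rho : sqnorm q = 1 -> q 3%:R 0 != 1 -> u 3%:R 0 != 0 ->
  hrefl u q 3%:R 0 != 1 -> rho ^+ 2 = sqnorm u / u 3%:R 0 ^+ 2 ->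
  sphere_inv (inv_center u) rho (stereo q) = stereo (hrefl u q).
Proof.
move=> q1 q3 u3 s3 rho2.
have u0 := sqnorm_coord_neq0 u3.
rewrite /sphere_inv sqnorm_stereo_sub_center // rho2.
move: s3; rewrite eq_sym -subr_eq0 hrefl3 => s3.
have {}q3 : 1 - q 3%:R 0 != 0 by rewrite subr_eq0 eq_sym.
apply/matrixP => i j; rewrite !mxE.
field; rewrite u3 u0 q3 /=.
rewrite andbT; apply: contra_neq s3 => s0.
by rewrite -(mul0r (sqnorm u)^-1) -s0; field.
Qed.

Lemma stereo_hrefl_off_center q u : sqnorm q = 1 -> q 3%:R 0 != 1 -> u 3%:R 0 != 0 ->
  stereo q != inv_center u ->
  hrefl u q 3%:R 0 != 1 /\ stereo (hrefl u q) != inv_center u.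
Proof.
move=> q1 q3 u3 qa.
have s3 : hrefl u q 3%:R 0 != 1.
  apply: contra_neq qa => s1; apply/eqP; rewrite -subr_eq0 -sqnorm_eq0.
  by rewrite sqnorm_stereo_sub_center // s1 subrr mulr0 mul0r.
split=> //; rewrite -subr_eq0 -sqnorm_eq0.
rewrite sqnorm_stereo_sub_center ?sqnorm_hrefl // hreflK.
by rewrite !mulf_neq0 ?invr_eq0 ?mulf_neq0 ?expf_neq0 ?(sqnorm_coord_neq0 u3) // subr_eq0 eq_sym.
Qed.

Lemma sphere_inv_stereo_image (S : set 'cV[R]_4) u rho :
  S `<=` [set q | sqnorm q = 1] -> (forall q, S q -> S (hrefl u q)) ->
  u 3%:R 0 != 0 -> rho ^+ 2 = sqnorm u / u 3%:R 0 ^+ 2 ->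
  let Q := @stereo R @` (S `\ north_pole R) in
  sphere_inv (inv_center u) rho @` (Q `\ inv_center u) = Q `\ inv_center u.
Proof.
move=> S1 Su u3 rho2 Q.
have Q_hrefl q : S q -> q != north_pole R -> stereo q != inv_center u ->
    [/\ Q (stereo (hrefl u q)), stereo (hrefl u q) != inv_center u,
        hrefl u q != north_pole R &
        sphere_inv (inv_center u) rho (stereo q) = stereo (hrefl u q)].
  move=> Sq qN qa; have q1 := S1 q Sq.
  have q3 : q 3%:R 0 != 1 by apply: contra_neq qN; apply: north_poleP.
  have [s3 sa] := stereo_hrefl_off_center q1 q3 u3 qa.
  have sN : hrefl u q != north_pole R by apply: contra_neq s3 => ->; rewrite north_pole3.
  split; rewrite ?sphere_inv_stereo //.
  by exists (hrefl u q) => //; split; [apply: Su | apply/eqP].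
apply/seteqP; split.
- move=> _ [_ [[q [Sq /eqP qN] <-] /eqP qa] <-].
  have [Qs sa _ ->] := Q_hrefl q Sq qN qa.
  by split=> //; apply/eqP.
- move=> _ [[q [Sq /eqP qN] <-] /eqP qa].
  have [Qs sa sN _] := Q_hrefl q Sq qN qa.
  have [_ _ _ inv_s] := Q_hrefl _ (Su q Sq) sN sa.
  exists (stereo (hrefl u q)); last by rewrite inv_s hreflK.
  by split=> //; apply/eqP.
Qed.

Lemma is_line_pencil w0 w1 : w1 3%:R 0 = 0 -> w1 != 0 ->
  is_line [set inv_center w0 + t *: top3 w1 | t in [set: R]].
Proof.
move=> w13 w10; exists (inv_center w0), (top3 w1); split=> //.
by rewrite -sqnorm_eq0 sqnorm_top3 w13 expr0n subr0 sqnorm_eq0.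
Qed.

Lemma gen_refl_sym_pencil (S : set 'cV[R]_4) w0 w1 :
  S `<=` [set q | sqnorm q = 1] -> (forall t q, S q -> S (hrefl (w0 + t *: w1) q)) ->
  w0 3%:R 0 != 0 -> w1 3%:R 0 = 0 -> dot w0 w1 = 0 ->
  gen_refl_sym (@stereo R @` (S `\ north_pole R))
    [set inv_center w0 + t *: top3 w1 | t in [set: R]].
Proof.
move=> S1 Sw k0 w13 w01; set k := w0 3%:R 0 in k0 *.
have w0_gt0 : 0 < sqnorm w0 by rewrite lt_def (sqnorm_coord_neq0 k0) sqnorm_ge0.
have rho0_ge0 : 0 <= sqnorm w0 / k ^+ 2 by rewrite divr_ge0 ?sqnorm_ge0 ?sqr_ge0.
exists (inv_center w0), (Num.sqrt (sqnorm w0 / k ^+ 2)); split.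
  by exists 0 => //; rewrite scale0r addr0.
split; first by rewrite sqrtr_gt0 divr_gt0 // lt_def sqrf_eq0 k0 sqr_ge0.
move=> _ [t _ <-] rho.
pose u := w0 - (t * k) *: w1.
have u3 : u 3%:R 0 = k by rewrite !mxE w13 mulr0 subr0.
have -> : inv_center w0 + t *: top3 w1 = inv_center u.
  by apply/matrixP => i j; rewrite !mxE w13 mulr0 subr0 -/k; field.
apply: (sphere_inv_stereo_image S1); rewrite ?u3 //.
  by move=> q Sq; rewrite /u -scaleNr; apply: Sw.
rewrite /rho sqr_sqrtr ?addr_ge0 ?sqr_ge0 // vnorm_sqr sqr_sqrtr // addrAC subrr add0r.
rewrite sqnormZ sqnorm_top3 w13 /u sqnormB dotC dotZl dotC w01 sqnormZ.
by field.
Qed.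

End Stereographic.

Section CliffordTorus.
Variable R : realType.
Implicit Types (p v : 'cV[R]_4) (Rot : 'M[R]_4).

Lemma sqnorm4 p : sqnorm p = p 0 0 ^+ 2 + p 1 0 ^+ 2 + p 2%:R 0 ^+ 2 + p 3%:R 0 ^+ 2.
Proof.
rewrite /sqnorm !big_ord_recr big_ord0 /= add0r.
by congr (_ + _ + _ + _); congr (p _ 0 ^+ 2); apply: val_inj.
Qed.

Lemma clifford_torus_unit : @clifford_torus R `<=` [set p | sqnorm p = 1].
Proof. by move=> p [p01 p23]; rewrite /= sqnorm4; lra. Qed.

Lemma clifford_torus_hrefl v p :
  (v 2%:R 0 = 0 /\ v 3%:R 0 = 0) \/ (v 0 0 = 0 /\ v 1 0 = 0) ->
  @clifford_torus R p -> @clifford_torus R (hrefl v p).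
Proof.
move=> v_supp [p01 p23]; have := sqnorm_hrefl v p; rewrite !sqnorm4.
case: v_supp => [[vi vj]|[vi vj]];
  by rewrite /clifford_torus /= (hrefl_coord p vi) (hrefl_coord p vj); lra.
Qed.

Lemma rotated_image_gen_refl_sym Rot (S : set 'cV[R]_4) (i j : 'I_4) :
  Rot^T *m Rot = 1%:M -> i != j -> Rot 3%:R i ^+ 2 + Rot 3%:R j ^+ 2 != 0 ->
  S `<=` [set p | sqnorm p = 1] ->
  (forall a b p, S p -> S (hrefl (a *: delta_mx i 0 + b *: delta_mx j 0) p)) ->
  exists l, is_line l /\
    gen_refl_sym (@stereo R @` (((fun p => Rot *m p) @` S) `\ north_pole R)) l.
Proof.
move=> RTR ij k0 S1 Sij.
set ga := Rot 3%:R i in k0 *; set de := Rot 3%:R j in k0 *.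
(* (ga, de) is the w-row of Rot on the columns i, j: w0 has w-coordinate
   ga^2 + de^2 and w1 is horizontal. *)
pose w0 := ga *: col i Rot + de *: col j Rot.
pose w1 := de *: col i Rot + (- ga) *: col j Rot.
have dot_ij : dot (col i Rot) (col j Rot) = 0 by rewrite dot_col_orthogonal // (negbTE ij).
have dot_ji : dot (col j Rot) (col i Rot) = 0 by rewrite dotC.
have := dot_col_orthogonal i i RTR; rewrite eqxx /= => dot_ii.
have := dot_col_orthogonal j j RTR; rewrite eqxx /= => dot_jj.
have w13 : w1 3%:R 0 = 0 by rewrite !mxE -/ga -/de; ring.
have w10 : w1 != 0.
  rewrite -sqnorm_eq0 sqnorm_dot !(dotDl, dotZl, dotDr, dotZr) dot_ij dot_ji dot_ii dot_jj.
  by apply: contra k0 => /eqP w10; apply/eqP; rewrite -[RHS]w10; ring.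
exists [set inv_center w0 + t *: top3 w1 | t in [set: R]].
split; first exact: is_line_pencil.
apply: gen_refl_sym_pencil.
- by move=> _ [p Sp <-]; rewrite /= sqnorm_orthogonal //; apply: S1.
- move=> t p.
  have -> : w0 + t *: w1 =
      Rot *m ((ga + t * de) *: delta_mx i 0 + (de - t * ga) *: delta_mx j 0).
    rewrite mulmxDr -!scalemxAr -!colE; apply/matrixP => r c; rewrite !mxE; ring.
  by apply: orthogonal_image_hrefl => // q; apply: Sij.
- by rewrite !mxE -/ga -/de -!expr2.
- exact: w13.
- by rewrite !(dotDl, dotZl, dotDr, dotZr) dot_ij dot_ji dot_ii dot_jj; ring.
Qed.

End CliffordTorus.

Theorem theorem2 (R : realType) (Rot : 'M[R]_4) :
  @rotation R 4 Rot ->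
  let Q := @stereo R @` (((fun p => Rot *m p) @` @clifford_torus R) `\ @north_pole R) in
  exists l : set 'cV[R]_3, @is_line R l /\ @gen_refl_sym R Q l.
Proof.
move=> [RTR _] Q.
have RRT : Rot^T^T *m Rot^T = 1%:M by rewrite trmxK mulmx1C.
have := dot_col_orthogonal 3%:R 3%:R RRT; rewrite eqxx /= -sqnorm_dot sqnorm4 !mxE => row3.
have [row01|row01] := eqVneq (Rot 3%:R 0 ^+ 2 + Rot 3%:R 1 ^+ 2) 0.
- apply: (rotated_image_gen_refl_sym (i := 2%:R) (j := 3%:R)) => //.
  + by apply/eqP; lra.
  + exact: clifford_torus_unit.
  + by move=> a b p; apply: clifford_torus_hrefl; right; rewrite !mxE /= !mulr0 addr0.
- apply: (rotated_image_gen_refl_sym (i := 0) (j := 1)) => //.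
  + exact: clifford_torus_unit.
  + by move=> a b p; apply: clifford_torus_hrefl; left; rewrite !mxE /= !mulr0 addr0.
Qed.
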